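(* Let $G$ be a finite simple graph, $P$ a pebble distribution, and $U$ a unit distribution of nonzero size on a vertex $u$, disjoint from $P$. Let $c$ be a cooperation vertex such that, under $P+U$, a pebbling move removing pebbles from $c$ can be made after some pebbling sequence (i.e. $c$ is $2$-reachable under $P+U$). Then either $c$ has two neighbors $e,f$ each with cooperation excess at least $1$ and with $M(e)<M(c)$, $M(f)<M(c)$, or $c$ has a neighbor $d$ with cooperation excess at least $3$ and $M(d)<M(c)$.
   Context: A pebble distribution is a function $V(G)\to\mathbb{Z}_{\geq0}$; $(P+U)(v)=P(v)+U(v)$. A pebbling move removes two pebbles from a vertex and adds one to an adjacent vertex; a pebbling sequence is an executable sequence of moves, and $(P+U)_\sigma$ is the result of applying $\sigma$. A vertex $v$ is $k$-reachable under a distribution if some pebbling sequence yields at least $k$ pebbles on $v$; reachable means $1$-reachable. $\mathrm{reach}(P,v)$ is the largest such $k$; $\mathrm{exc}(P,v)=\mathrm{reach}(P,v)-1$ if $v$ is reachable, else $0$. A cooperation vertex is reachable under $P+U$ but under neither $P$ nor $U$. The cooperation excess of $v$ is $\mathrm{exc}(P+U,v)-\mathrm{exc}(P,v)-\mathrm{exc}(U,v)$. A vertex is utilized by a pebbling sequence if some move of it removes or adds a pebble at that vertex. $M(v)$ is the minimum, over pebbling sequences $\sigma$ from $P+U$ with $(P+U)_\sigma(v)\geq 2$, of the number of cooperation vertices utilized by $\sigma$ (counting $v$ if it is a cooperation vertex); $M(v)=\infty$ if $v$ is not $2$-reachable under $P+U$. *)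

From Stdlib Require Import ClassicalDescription.
From mathcomp Require Import all_boot all_order all_algebra.
Set Implicit Arguments. Unset Strict Implicit. Unset Printing Implicit Defensive.

Definition pbool (A : Prop) : bool :=
  if excluded_middle_informative A then true else false.

Section Pebbling.
Variables (T : finType) (e : rel T).

Definition dist := T -> nat.

Definition addD (P U : dist) : dist := fun x => P x + U x.

Definition unitD (u : T) (n : nat) : dist := fun x => if x == u then n else 0.

Definition total (D : dist) : nat := \sum_(x : T) D x.

(* a pebbling move (a, b): remove two pebbles from a, add one to adjacent b *)
Definition move := (T * T)%type.

Definition step (D : dist) (m : move) : option dist :=
  let: (a, b) := m in
  if e a b && (2 <= D a) then
    Some (fun x => if x == a then D x - 2 else if x == b then D x + 1 else D x)
  else None.

Fixpoint run (D : dist) (s : seq move) : option dist :=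
  match s with
  | [::] => Some D
  | m :: s' => match step D m with Some D' => run D' s' | None => None end
  end.

Definition kreachable (D : dist) (v : T) (k : nat) : Prop :=
  exists s D', run D s = Some D' /\ k <= D' v.

Definition reachable (D : dist) (v : T) : Prop := kreachable D v 1.

(* reach(D,v): the largest k such that v is k-reachable (any such k is at
   most the total number of pebbles, since moves never increase it) *)
Definition reach (D : dist) (v : T) : nat :=
  \max_(k < (total D).+1 | pbool (kreachable D v k)) k.

Definition exc (D : dist) (v : T) : nat :=
  if pbool (reachable D v) then (reach D v).-1 else 0.

Definition coop_vertex (P U : dist) (v : T) : Prop :=
  reachable (addD P U) v /\ ~ reachable P v /\ ~ reachable U v.

Definition coop_excess (P U : dist) (v : T) : int :=
  (exc (addD P U) v)%:Z - (exc P v)%:Z - (exc U v)%:Z.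

Definition utilized (s : seq move) (w : T) : bool :=
  has (fun m : move => (m.1 == w) || (m.2 == w)) s.

Definition coop_used (P U : dist) (v : T) (s : seq move) : nat :=
  #|[set w : T | pbool (coop_vertex P U w) && (utilized s w || (w == v))]|.

Definition M_le (P U : dist) (v : T) (k : nat) : Prop :=
  exists s D', run (addD P U) s = Some D' /\ 2 <= D' v /\ coop_used P U v s <= k.

(* M(v) : None stands for infinity *)
Definition Mval (P U : dist) (v : T) : option nat :=
  if pbool (kreachable (addD P U) v 2) then
    Some (\big[minn/#|T|]_(k < #|T|.+1 | pbool (M_le P U v k)) k)
  else None.

Definition Mlt (a b : option nat) : bool :=
  match a, b with
  | Some x, Some y => x < y
  | Some _, None => true
  | None, _ => false
  end.

End Pebbling.

From mathcomp Require Import all_boot all_order all_algebra zify.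
From Stdlib Require Import ClassicalDescription.
Import Order.TTheory GRing.Theory.
Set Implicit Arguments. Unset Strict Implicit. Unset Printing Implicit Defensive.

(* The cooperation vertex c starts empty, for otherwise it would be reachable
   under P or U alone.  Take a sequence realising M(c) and cut it at the first
   moment c holds two pebbles: no move of the cut sequence leaves c, so c has
   received at least two pebbles from neighbours.  Deleting the moves into c
   leaves an executable sequence in which every neighbour d that sent j
   pebbles to c keeps 2j extra pebbles.  So d is 2j-reachable under P + U,
   whereas d is not 2-reachable under P or U (c would then be reachable), and
   its cooperation excess is at least 2j - 1.  The shortened sequence no
   longer utilizes c, hence M(d) < M(c).  Two distinct senders give the first
   alternative, a single one with j >= 2 the second.  Neither the shape of U
   nor its disjointness from P plays a role. *)

Arguments step : simpl never.

Lemma pboolP (A : Prop) : reflect A (pbool A).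
Proof. by rewrite /pbool; case: excluded_middle_informative => h; constructor. Qed.

Section Pebbling.
Variables (T : finType) (e : rel T).
Implicit Types (D E : dist T) (s t : seq (move T)).

Definition moved D (a b : T) : dist T :=
  fun x => if x == a then D x - 2 else if x == b then D x + 1 else D x.

Lemma stepE D a b :
  step e D (a, b) = if e a b && (1 < D a) then Some (moved D a b) else None.
Proof. by []. Qed.

Lemma run_cat D s t :
  run e D (s ++ t) = if run e D s is Some D' then run e D' t else None.
Proof. by elim: s D => [|m s IH] D //=; case: step. Qed.

Lemma run_edges D s D' : run e D s = Some D' -> all (fun m => e m.1 m.2) s.
Proof.
elim: s D => [|[a b] s IH] D //=.
by rewrite stepE; case: ifP => // /andP [-> _] /IH.
Qed.

Lemma kreachableW D v k k' : k' <= k -> kreachable e D v k -> kreachable e D v k'.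
Proof. by move=> le_k [s [D' [hr hk]]]; exists s, D'; split=> //; apply: leq_trans hk. Qed.

Lemma reachable_pos D v : 0 < D v -> reachable e D v.
Proof. by move=> Dv; exists [::], D. Qed.

Lemma reachable_nbr D d c : e d c -> d != c -> kreachable e D d 2 -> reachable e D c.
Proof.
move=> edc dc [s [D' [hr D'd]]]; exists (s ++ [:: (d, c)]), (moved D' d c).
by rewrite run_cat hr /= stepE edc D'd /moved [c == d]eq_sym (negbTE dc) eqxx addn1.
Qed.

Lemma exc_nbr_eq0 D d c : e d c -> d != c -> ~ reachable e D c -> exc e D d = 0.
Proof.
move=> edc dc nrc; rewrite /exc; case: pboolP => // _.
suff : reach e D d <= 1 by case: (reach e D d) => [|[]].
apply/bigmax_leqP => k /pboolP dk; rewrite leqNgt; apply/negP => k_gt1.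
by apply: nrc; apply: (reachable_nbr edc dc); apply: kreachableW dk.
Qed.

Section Irreflexive.
Hypothesis e_irr : irreflexive e.

Lemma step_total D a b D' : step e D (a, b) = Some D' -> total D' + 1 = total D.
Proof.
rewrite stepE; case: ifP => // /andP [eab Da] [<-].
have ba : b != a by apply: contraTneq eab => ->; rewrite e_irr.
rewrite /total (bigD1 a) // [in RHS](bigD1 a) // (bigD1 b) // [in RHS](bigD1 b) //=.
rewrite /moved !eqxx (negbTE ba).
rewrite (eq_bigr D) => [|x /andP [xa xb]]; last by rewrite (negbTE xa) (negbTE xb).
lia.
Qed.

Lemma run_total D s D' : run e D s = Some D' -> total D' <= total D.
Proof.
elim: s D => [|[a b] s IH] D /=; first by case=> ->.
case hs: step => [D1|] // /IH; have := step_total hs; lia.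
Qed.

Lemma kreachable_le_total D v k : kreachable e D v k -> k <= total D.
Proof.
case=> s [D' [hr hk]]; apply: leq_trans hk (leq_trans _ (run_total hr)).
by rewrite /total (bigD1 v) //= leq_addr.
Qed.

Lemma kreachable_le_reach D v k : kreachable e D v k -> k <= reach e D v.
Proof.
move=> hk; have k_lt : k < (total D).+1 by rewrite ltnS (kreachable_le_total hk).
by apply: (@leq_bigmax_cond _ _ _ (Ordinal k_lt)); apply/pboolP.
Qed.

Lemma exc_ge D v k : kreachable e D v k.+1 -> k <= exc e D v.
Proof.
move=> hk; rewrite /exc; case: pboolP => [_|nr]; last first.
  by case: nr; apply: kreachableW hk.
by have := kreachable_le_reach hk; case: (reach e D v).
Qed.

Lemma coop_excess_ge (P U : dist T) d c k :
  e d c -> d != c -> ~ reachable e P c -> ~ reachable e U c ->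
  kreachable e (addD P U) d k.+1 -> (k%:Z <= coop_excess e P U d)%R.
Proof.
move=> edc dc nPc nUc hk.
by rewrite /coop_excess (exc_nbr_eq0 edc dc nPc) (exc_nbr_eq0 edc dc nUc) !subr0 lez_nat exc_ge.
Qed.

End Irreflexive.

Lemma run_cut_at_2 D s D' c :
  run e D s = Some D' -> D c < 2 -> 1 < D' c ->
  exists t D2, [/\ run e D t = Some D2, 1 < D2 c,
                   all (fun m => m.1 != c) t & {subset t <= s}].
Proof.
elim: s D => [|[a b] s IH] D /=; first by case=> ->; lia.
rewrite stepE; case: ifP => // /andP [eab Da] hr Dc D'c.
have ac : a != c by apply: contraTneq Da => ->; lia.
have [Mc_lt|Mc_ge] := ltnP (moved D a b c) 2.
  have [t [D2 [ht D2c t_out ts]]] := IH _ hr Mc_lt D'c.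
  exists ((a, b) :: t), D2; split=> /=; [by rewrite stepE eab Da | done | by rewrite ac |].
  by move=> m; rewrite !inE => /orP [-> // | /ts ->]; rewrite orbT.
exists [:: (a, b)], (moved D a b); split=> /=; [by rewrite stepE eab Da | done | by rewrite ac |].
by move=> m; rewrite inE => /eqP ->; rewrite mem_head.
Qed.

Definition senders (c : T) s : seq T := [seq m.1 | m <- s & m.2 == c].

Lemma mem_senders c s d : (d \in senders c s) = ((d, c) \in s).
Proof.
apply/mapP/idP => [[[a b]] | dcs]; last by exists (d, c); rewrite // mem_filter eqxx.
by rewrite mem_filter /= => /andP [/eqP -> ?] ->.
Qed.

(* The surplus [off] is needed for the induction: every dropped move leaves
   two extra pebbles on its sender. *)
Lemma run_drop_moves_into c s D D' E (off : T -> nat) :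
  run e D s = Some D' -> all (fun m => m.1 != c) s ->
  (forall x, x != c -> D x + off x <= E x) ->
  exists2 E', run e E [seq m <- s | m.2 != c] = Some E' &
    forall x, x != c -> D' x + off x + 2 * count_mem x (senders c s) <= E' x.
Proof.
elim: s D E off => [|[a b] s IH] D E off /=.
  by case=> <- _ DE; exists E => // x xc; rewrite muln0 addn0 DE.
rewrite stepE; case: ifP => // /andP [eab Da] hr /andP [ac s_out] DE.
have [bc | bc] := eqVneq b c.
  subst b => /=.
  have [x xc | E' hE' E'x] := IH _ E (fun x => off x + 2 * (x == a)) hr s_out.
    have := DE x xc; rewrite /moved (negbTE xc).
    by have [-> | xa] := eqVneq x a; rewrite /=; lia.
  by exists E' => // x xc; have := E'x x xc; rewrite /senders /= eqxx /= (eq_sym a x); lia.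
have [x xc | E' hE' E'x] := IH _ (moved E a b) off hr s_out.
  have := DE x xc; rewrite /moved.
  by have [-> | _] := eqVneq x a; [lia | case: (x == b); lia].
exists E'; first by rewrite /= stepE eab /= ifT //; have := DE a ac; lia.
by move=> x xc; have := E'x x xc; rewrite /senders /= (negbTE bc).
Qed.

Lemma run_received c s D D' :
  run e D s = Some D' -> all (fun m => m.1 != c) s -> D' c = D c + size (senders c s).
Proof.
elim: s D => [|[a b] s IH] D /=; first by case=> ->; rewrite addn0.
rewrite stepE; case: ifP => // _ hr /andP [ac s_out].
rewrite (IH _ hr s_out) /moved eq_sym (negbTE ac) [c == b]eq_sym.
by rewrite /senders /=; case: (b == c) => /=; lia.
Qed.

Lemma coop_vertex_empty (P U : dist T) c : coop_vertex e P U c -> addD P U c = 0.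
Proof.
case=> _ [nPc nUc]; rewrite /addD.
suff [-> ->] : P c = 0 /\ U c = 0 by [].
by split; apply/eqP; rewrite -leqn0 leqNgt; apply/negP => /reachable_pos.
Qed.

Lemma coop_used_subset (P U : dist T) v t s :
  {subset t <= s} -> coop_used e P U v t <= coop_used e P U v s.
Proof.
move=> ts; apply/subset_leq_card/subsetP => w; rewrite !inE.
case/andP=> -> /orP [/hasP [m /ts ms wm] | ->]; rewrite ?orbT //.
by apply/orP; left; apply/hasP; exists m.
Qed.

Lemma coop_used_drop_lt (P U : dist T) c d t :
  coop_vertex e P U c -> all (fun m => m.1 != c) t -> d \in senders c t ->
  coop_used e P U d [seq m <- t | m.2 != c] < coop_used e P U c t.
Proof.
move=> /pboolP c_coop t_out; rewrite mem_senders => dct.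
have cd : c != d by rewrite eq_sym (allP t_out _ dct).
apply/proper_card/properP; split.
  apply/subsetP => w; rewrite !inE => /andP [-> /orP [/hasP [m] | /eqP ->]] /=.
    by rewrite mem_filter => /andP [_ mt] wm; apply/orP; left; apply/hasP; exists m.
  by apply/orP; left; apply/hasP; exists (d, c); rewrite //= eqxx.
exists c; first by rewrite inE c_coop eqxx orbT.
rewrite inE c_coop (negbTE cd) orbF; apply/hasPn => m.
by rewrite mem_filter => /andP [/negbTE -> /(allP t_out) /negbTE ->].
Qed.

Lemma Mval_le_coop_used (P U : dist T) v s D' :
  run e (addD P U) s = Some D' -> 1 < D' v ->
  exists2 m, Mval e P U v = Some m & m <= coop_used e P U v s.
Proof.
move=> hs D'v; rewrite /Mval; case: pboolP => [_ | []]; last by exists s, D'.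
eexists; first reflexivity.
have used_lt : coop_used e P U v s < #|T|.+1 by rewrite ltnS max_card.
rewrite -minEnat; apply: (@bigmin_le_cond _ nat _ #|T| (Ordinal used_lt)).
by apply/pboolP; exists s, D'.
Qed.

Lemma Mval_attained (P U : dist T) v :
  kreachable e (addD P U) v 2 -> exists m, Mval e P U v = Some m /\ M_le e P U v m.
Proof.
move=> v2; rewrite /Mval; case: pboolP => // _; eexists; split; first reflexivity.
apply: (big_ind (M_le e P U v)) => [| k k' Mk Mk' | k /pboolP //].
  by case: v2 => s [D' [hs D'v]]; exists s, D'; do !split=> //; apply: max_card.
by rewrite /minn; case: ifP.
Qed.

End Pebbling.

Lemma repeat_or_two_distinct (X : eqType) (s : seq X) :
  1 < size s ->
  (exists2 x, x \in s & 1 < count_mem x s) \/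
  exists x y, [/\ x != y, x \in s & y \in s].
Proof.
case: s => [|x s] // s_gt1.
have [x_in | x_notin] := boolP (x \in s).
  left; exists x; first exact: mem_head.
  by rewrite /= eqxx add1n ltnS -has_count has_pred1.
right; case: s s_gt1 x_notin => [|y s] // _ x_notin; exists x, y.
split; [ | exact: mem_head | by rewrite inE mem_head orbT].
by apply: contraNneq x_notin => ->; apply: mem_head.
Qed.

Section Cooperation.
Variables (T : finType) (e : rel T).
Hypotheses (e_sym : symmetric e) (e_irr : irreflexive e).
Variables (P U : dist T) (c : T) (t : seq (move T)) (D2 : dist T).
Hypotheses (c_coop : coop_vertex e P U c) (ht : run e (addD P U) t = Some D2)
  (t_out : all (fun m => m.1 != c) t).

Lemma senders_edge d : d \in senders c t -> e c d.
Proof. by rewrite mem_senders e_sym => /(allP (run_edges ht)). Qed.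

Lemma senders_neq d : d \in senders c t -> d != c.
Proof. by rewrite mem_senders => /(allP t_out). Qed.

Lemma run_drop_moves_into_c :
  exists2 E', run e (addD P U) [seq m <- t | m.2 != c] = Some E' &
    forall x, x != c -> D2 x + 2 * count_mem x (senders c t) <= E' x.
Proof.
have [x _ | E' hE' E'x] := run_drop_moves_into (E := addD P U) (off := fun=> 0) ht t_out.
  by rewrite addn0.
by exists E' => // x xc; have := E'x x xc; rewrite addn0.
Qed.

Lemma senders_coop_excess d k :
  0 < k <= count_mem d (senders c t) -> ((2 * k).-1%:Z <= coop_excess e P U d)%R.
Proof.
case/andP=> k_gt0 k_le.
have dS : d \in senders c t by rewrite -has_pred1 has_count; lia.
have [E' hE' E'x] := run_drop_moves_into_c.
have [_ [nPc nUc]] := c_coop.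
have edc : e d c by rewrite e_sym senders_edge.
apply: (coop_excess_ge e_irr edc (senders_neq dS) nPc nUc).
exists [seq m <- t | m.2 != c], E'; split=> //.
by have := E'x d (senders_neq dS); lia.
Qed.

Lemma senders_Mlt d m :
  d \in senders c t -> coop_used e P U c t <= m -> Mlt (Mval e P U d) (Some m).
Proof.
move=> dS used_le; have [E' hE' E'x] := run_drop_moves_into_c.
have E'd : 1 < E' d.
  by have := E'x d (senders_neq dS); rewrite -has_pred1 has_count in dS; lia.
have [m' -> /= m'_le] := Mval_le_coop_used hE' E'd.
apply: leq_ltn_trans m'_le (leq_trans _ used_le).
exact: coop_used_drop_lt c_coop t_out dS.
Qed.

End Cooperation.

Theorem claim3p5 (T : finType) (e : rel T)
  (e_sym : symmetric e) (e_irr : irreflexive e)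
  (P : T -> nat) (u : T) (n : nat) (n_pos : (0 < n)%N) (disj : P u = 0%N)
  (c : T)
  (c_coop : coop_vertex e P (unitD u n) c)
  (c_2reach : kreachable e (addD P (unitD u n)) c 2) :
  (exists f1 f2 : T, f1 != f2 /\ e c f1 /\ e c f2 /\
     (1 <= coop_excess e P (unitD u n) f1)%R /\
     (1 <= coop_excess e P (unitD u n) f2)%R /\
     Mlt (Mval e P (unitD u n) f1) (Mval e P (unitD u n) c) /\
     Mlt (Mval e P (unitD u n) f2) (Mval e P (unitD u n) c))
  \/
  (exists d : T, e c d /\
     (3 <= coop_excess e P (unitD u n) d)%R /\
     Mlt (Mval e P (unitD u n) d) (Mval e P (unitD u n) c)).
Proof.
have [mc [-> [s [D' [hs [D'c used_s]]]]]] := Mval_attained c_2reach.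
have c_empty := coop_vertex_empty c_coop.
have c_lt2 : addD P (unitD u n) c < 2 by rewrite c_empty.
have [t [D2 [ht D2c t_out ts]]] := run_cut_at_2 hs c_lt2 D'c.
have used_t := leq_trans (coop_used_subset e P (unitD u n) c ts) used_s.
have two_received : 1 < size (senders c t).
  by have := run_received ht t_out; rewrite c_empty add0n => <-.
have exc1 d : d \in senders c t -> (1 <= coop_excess e P (unitD u n) d)%R.
  by move=> dS; apply: (senders_coop_excess e_sym e_irr c_coop ht t_out (k := 1));
    rewrite /= -has_count has_pred1.
have [[d dS d_twice] | [d1 [d2 [d12 d1S d2S]]]] := repeat_or_two_distinct two_received.
  right; exists d; split; first exact: (senders_edge e_sym ht dS).
  split; last exact: (senders_Mlt c_coop ht t_out dS used_t).
  exact: (senders_coop_excess e_sym e_irr c_coop ht t_out (k := 2)).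
left; exists d1, d2; do !split=> //.
- exact: (senders_edge e_sym ht d1S).
- exact: (senders_edge e_sym ht d2S).
- exact: (exc1 _ d1S).
- exact: (exc1 _ d2S).
- exact: (senders_Mlt c_coop ht t_out d1S used_t).
- exact: (senders_Mlt c_coop ht t_out d2S used_t).
Qed.
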